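(* In the setting of the context, for each integer $r\ge r_0$ there are elements $g_0\in F_{xz}$ and $g_1\in F_{yz}$ such that: (1) $s_2^{-1}g_0s_2=g_1$; (2) $r/D\le|g_0|_{R_{xz}}\le r$ and $r/D\le|g_1|_{R_{yz}}\le r$; (3) there is a path $\gamma$ in the Cayley graph $\Gamma(G_1,S_1)$ connecting $g_0$ and $g_1$ of length at most $Df(r)$, each vertex of which is of the form $g_0h$ with $h\in H$; in particular $\gamma$ avoids the open ball of radius $r/D$ about $e$.
   Context: $H$ is a finitely presented group with finite generating set $T$, containing a free subgroup $F$ of rank $p$ with free basis $R=\{d_1,\dots,d_p\}\subset T$. $F_x,F_y,F_z$ are free of rank $p$ with bases $R_x=\{x_i\},R_y=\{y_i\},R_z=\{z_i\}$. $G_1=[H\ast_{\langle d_i=x_iy_i^{-1}\rangle}(F_x\times F_y\times F_z)]\times\langle s_1\rangle$; $a_i=x_iz_i$, $b_i=y_iz_i$, $R_{xz}=\{a_i\}$, $R_{yz}=\{b_i\}$, $F_{xz}=\langle R_{xz}\rangle$, $F_{yz}=\langle R_{yz}\rangle$; $G_2=\langle G_1,s_2\mid s_2^{-1}a_is_2=b_i,\ 1\le i\le p\rangle$; $S_1=T\cup R_x\cup R_y\cup R_z\cup R_{xz}\cup R_{yz}\cup\{s_1\}$. $f=\Delta^{-1}$ where $\Delta$ is a non-decreasing bijection of $[0,\infty)$ Lipschitz equivalent to $\mathrm{Dist}_F^H$ (with $\mathrm{Dist}_F^H(n)=\max\{|g|_R:g\in F,|g|_T\le n\}$), $\Delta(r)\ge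 r$ for $r\ge1$, $f(|g|_R)\le|g|_T$ for $g\in F$; and $D>1$, $r_0\ge1$ are constants such that for each $r\ge r_0$ there is an element $u\in F$ which is palindromic with respect to $R$ (its reduced word in $R$ reads the same in both directions) with $r/D\le|u|_R\le r$ and $|u|_T\le Df(r)$. (Such $\Delta,D,r_0$ exist when $\mathrm{Dist}_F^H$ admits an exponentially bounded sequence of palindromic certificates in $F$, the standing assumption.) *)

From Stdlib Require Import Reals.
From mathcomp Require Import all_boot.

Set Implicit Arguments.
Unset Strict Implicit.
Unset Printing Implicit Defensive.

(* A word over an alphabet A: letters (a, false) = a, (a, true) = a^{-1}. *)
Definition word (A : Type) := seq (A * bool).

Definition inv_word (A : Type) (w : word A) : word A :=
  rev (map (fun x => (x.1, ~~ x.2)) w).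

(* Equality of words in the group < A | rels >: the smallest equivalence
   relation, compatible with concatenation, identifying a a^{-1} (and
   a^{-1} a) with the empty word and every relator with the empty word. *)
Inductive weq (A : Type) (rels : word A -> Prop) : word A -> word A -> Prop :=
| geq_refl w : weq rels w w
| geq_sym u v : weq rels u v -> weq rels v u
| geq_trans u v w : weq rels u v -> weq rels v w -> weq rels u w
| geq_cancel u v a b : weq rels (u ++ (a, b) :: (a, ~~ b) :: v) (u ++ v)
| geq_rel u v r : rels r -> weq rels (u ++ r ++ v) (u ++ v).

Definition no_rels (A : Type) : word A -> Prop := fun _ => False.

Definition ev (I A : Type) (e : I -> word A) (w : word I) : word A :=
  flatten (map (fun x => if x.2 then inv_word (e x.1) else e x.1) w).

(* n is the word length |g|_S of g with respect to the generating family e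
   (in the group < A | rels >). *)
Definition is_wlen (I A : Type) (rels : word A -> Prop) (e : I -> word A)
  (g : word A) (n : nat) : Prop :=
  (exists w : word I, size w = n /\ weq rels (ev e w) g) /\
  (forall w : word I, weq rels (ev e w) g -> (n <= size w)%N).

Definition reduced (A : Type) (w : word A) : Prop :=
  forall (u v : word A) (a : A) (b : bool), w <> u ++ (a, b) :: (a, ~~ b) :: v.

Definition comm (A : Type) (a b : A) : word A :=
  [:: (a, false); (b, false); (a, true); (b, true)].

Definition relsH (T : finType) (relH : seq (word T)) : word T -> Prop :=
  fun w => w \in relH.

Definition eT (T : Type) : T -> word T := fun t => [:: (t, false)].

Definition eR (T : Type) (p : nat) (d : 'I_p -> T) : 'I_p -> word T :=
  fun i => [:: (d i, false)].

Definition dist_is (T : finType) (relH : seq (word T)) (p : nat) (d : 'I_p -> T)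
  (n m : nat) : Prop :=
  (exists (w : word 'I_p) (k : nat),
      is_wlen (relsH relH) (@eT T) (ev (eR d) w) k /\ (k <= n)%N /\
      is_wlen (relsH relH) (eR d) (ev (eR d) w) m) /\
  (forall (w : word 'I_p) (k j : nat),
      is_wlen (relsH relH) (@eT T) (ev (eR d) w) k -> (k <= n)%N ->
      is_wlen (relsH relH) (eR d) (ev (eR d) w) j -> (j <= m)%N).

(** * G_1 = [H *_{d_i = x_i y_i^{-1}} (F_x x F_y x F_z)] x <s_1> *)

Inductive gen1 (T : Type) (p : nat) : Type :=
| gT of T
| gx of 'I_p
| gy of 'I_p
| gz of 'I_p
| gs1.
Arguments gs1 {T p}.

Definition liftH (T : Type) (p : nat) (w : word T) : word (gen1 T p) :=
  map (fun x => (gT p x.1, x.2)) w.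

Definition rels1 (T : finType) (relH : seq (word T)) (p : nat) (d : 'I_p -> T)
  : word (gen1 T p) -> Prop :=
  fun w =>
    (exists2 r, r \in relH & w = liftH p r) \/
    (exists i j, w = comm (gx T i) (gy T j)) \/
    (exists i j, w = comm (gx T i) (gz T j)) \/
    (exists i j, w = comm (gy T i) (gz T j)) \/
    (* d_i = x_i y_i^{-1} *)
    (exists i, w = [:: (gT p (d i), false); (gy T i, false); (gx T i, true)]) \/
    (exists c, w = comm gs1 c).

Definition eA (T : Type) (p : nat) : 'I_p -> word (gen1 T p) :=
  fun i => [:: (gx T i, false); (gz T i, false)].
Definition eB (T : Type) (p : nat) : 'I_p -> word (gen1 T p) :=
  fun i => [:: (gy T i, false); (gz T i, false)].

Inductive S1gen (T : Type) (p : nat) : Type :=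
| sT of T | sX of 'I_p | sY of 'I_p | sZ of 'I_p
| sA of 'I_p | sB of 'I_p | sS1.

Definition eS1 (T : Type) (p : nat) (s : S1gen T p) : word (gen1 T p) :=
  match s with
  | sT t => [:: (gT p t, false)]
  | sX i => [:: (gx T i, false)]
  | sY i => [:: (gy T i, false)]
  | sZ i => [:: (gz T i, false)]
  | sA i => eA T i
  | sB i => eB T i
  | sS1 => [:: (gs1, false)]
  end.

(** * G_2 = < G_1, s_2 | s_2^{-1} a_i s_2 = b_i > *)

Inductive gen2 (T : Type) (p : nat) : Type :=
| g2 of gen1 T p
| gs2.
Arguments gs2 {T p}.

Definition lift1 (T : Type) (p : nat) (w : word (gen1 T p)) : word (gen2 T p) :=
  map (fun x => (g2 x.1, x.2)) w.

Definition rels2 (T : finType) (relH : seq (word T)) (p : nat) (d : 'I_p -> T)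
  : word (gen2 T p) -> Prop :=
  fun w =>
    (exists2 r, rels1 relH d r & w = lift1 r) \/
    (exists i, w = (gs2, true) :: lift1 (eA T i) ++ (gs2, false) :: inv_word (lift1 (eB T i))).

(* Let u = d(w) be the palindromic certificate and put g0 = a(w), g1 = b(w).
   Conjugation by s2 sends a_i to b_i, hence g0 to g1.  In G1 the families x, y, z
   commute pairwise and d_i = x_i y_i^-1, so u = x(w) y(w)^-1 because w is a
   palindrome; hence g0 u^-1 = x(w) z(w) y(w) x(w)^-1 = g1, and a shortest T-word
   for u^-1 is a path from g0 to g1 inside g0 H.  All lengths are controlled by the
   homomorphism G1 -> H sending z_i to d_i and killing the other generators: it maps
   g0, g1 and every vertex g0 h of the path to u, and F is free on R, so |g0| = |g1|
   = |u|_R and every vertex has S1-length at least |u|_R >= r/D. *)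

From Stdlib Require Import Reals Setoid Morphisms.
From mathcomp Require Import all_boot.

Set Implicit Arguments.
Unset Strict Implicit.
Unset Printing Implicit Defensive.

Arguments ev : simpl never.
Arguments inv_word : simpl never.

Lemma inv_word_cons A (x : A * bool) (u : word A) :
  inv_word (x :: u) = inv_word u ++ [:: (x.1, ~~ x.2)].
Proof. by rewrite /inv_word /= rev_cons cats1. Qed.

Lemma inv_word_cat A (u v : word A) : inv_word (u ++ v) = inv_word v ++ inv_word u.
Proof. by rewrite /inv_word map_cat rev_cat. Qed.

Lemma inv_wordK A : involutive (@inv_word A).
Proof.
move=> u; rewrite /inv_word map_rev revK -map_comp.
by elim: u => [|[a b] u IH] //=; rewrite negbK IH.
Qed.

Lemma size_inv_word A (u : word A) : size (inv_word u) = size u.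
Proof. by rewrite /inv_word size_rev size_map. Qed.

Lemma ev_cons I A (e : I -> word A) x w :
  ev e (x :: w) = (if x.2 then inv_word (e x.1) else e x.1) ++ ev e w.
Proof. by []. Qed.

Lemma ev_cat I A (e : I -> word A) u v : ev e (u ++ v) = ev e u ++ ev e v.
Proof. by rewrite /ev map_cat flatten_cat. Qed.

Lemma ev_inv_word I A (e : I -> word A) w : ev e (inv_word w) = inv_word (ev e w).
Proof.
elim: w => [|[i b] w IH] //.
rewrite inv_word_cons ev_cat IH ev_cons inv_word_cat /= cats0.
by case: b; rewrite ?inv_wordK.
Qed.

Lemma ev_comp I J A (e : I -> word J) (phi : J -> word A) w :
  ev phi (ev e w) = ev (fun i => ev phi (e i)) w.
Proof.
elim: w => [|[i b] w IH] //.
by rewrite !ev_cons ev_cat IH; case: b; rewrite ?ev_inv_word.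
Qed.

Lemma eq_ev I A (e e' : I -> word A) : e =1 e' -> ev e =1 ev e'.
Proof. by move=> ee' w; rewrite /ev; congr flatten; apply: eq_map => -[i []]; rewrite ee'. Qed.

Lemma ev_letters I A (c : I -> A) w :
  ev (fun i => [:: (c i, false)]) w = map (fun x => (c x.1, x.2)) w.
Proof. by elim: w => [|[i []] w IH] //; rewrite ev_cons IH. Qed.

Lemma ev_letter_id A (w : word A) : ev (fun a => [:: (a, false)]) w = w.
Proof. by rewrite ev_letters -[RHS]map_id; apply: eq_map => -[]. Qed.

Lemma ev_nil_gens I A w : ev (fun _ : I => [::] : word A) w = [::].
Proof. by elim: w => [|[i []] w IH] //; rewrite ev_cons IH. Qed.

Lemma ev_map_letters I J A (c : I -> J) (e : J -> word A) w :
  ev e (map (fun x => (c x.1, x.2)) w) = ev (fun i => e (c i)) w.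
Proof. by rewrite /ev -map_comp. Qed.

Lemma ev_inv_gens I A (e : I -> word A) w :
  ev (fun i => inv_word (e i)) w = ev e (inv_word (rev w)).
Proof.
rewrite /inv_word map_rev revK; elim: w => [|[i b] w IH] //.
by rewrite !ev_cons IH; case: b; rewrite /= ?inv_wordK.
Qed.

Lemma size_ev_le I A (e : I -> word A) w :
  (forall i, size (e i) <= 1) -> size (ev e w) <= size w.
Proof.
move=> e_small; elim: w => [|[i b] w IH] //.
rewrite ev_cons size_cat; case: b; rewrite ?size_inv_word /=.
all: by rewrite -addn1 addnC leq_add.
Qed.

#[global] Hint Resolve geq_refl : core.

Section WordGroup.
Variables (A : Type) (rels : word A -> Prop).

#[global] Instance weq_equiv : Equivalence (weq rels).
Proof. by split; [exact: geq_refl | exact: geq_sym | exact: geq_trans]. Qed.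

Lemma weq_ctx x y u v : weq rels u v -> weq rels (x ++ u ++ y) (x ++ v ++ y).
Proof.
elim=> {u v} [w|u v _ IH|u v w _ IH1 _ IH2|u v a b|u v r Hr].
- by [].
- by symmetry.
- by rewrite IH1.
- by have := geq_cancel rels (x ++ u) (v ++ y) a b; rewrite -!catA.
- by have := geq_rel (x ++ u) (v ++ y) Hr; rewrite -!catA.
Qed.

#[global] Instance cat_weq :
  Proper (weq rels ==> weq rels ==> weq rels) (@cat (A * bool)).
Proof.
move=> u u' uu' v v' vv'; transitivity (u' ++ v); first exact: (weq_ctx [::] v uu').
by have := weq_ctx u' [::] vv'; rewrite !cats0.
Qed.

Lemma weq_rinv u : weq rels (u ++ inv_word u) [::].
Proof.
elim: u => [|[a b] u IH] //.
rewrite inv_word_cons -cat1s -catA (catA u) IH /=.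
exact: (geq_cancel rels [::] [::] a b).
Qed.

Lemma weq_linv u : weq rels (inv_word u ++ u) [::].
Proof. by have := weq_rinv (inv_word u); rewrite inv_wordK. Qed.

#[global] Instance inv_word_weq : Proper (weq rels ==> weq rels) (@inv_word A).
Proof.
move=> u v uv; rewrite -[inv_word u]cats0 -(weq_rinv v).
have := weq_ctx (inv_word u) (inv_word v) uv => <-.
by rewrite catA weq_linv.
Qed.

Lemma weq_rel_nil r : rels r -> weq rels r [::].
Proof. by move=> /(geq_rel [::] [::]); rewrite cats0. Qed.

Lemma weq_of_rel u v : rels (u ++ inv_word v) -> weq rels u v.
Proof.
by move=> /weq_rel_nil uv; rewrite -[u]cats0 -(weq_linv v) catA uv.
Qed.

Lemma ev_weq I (e e' : I -> word A) w :
  (forall i, weq rels (e i) (e' i)) -> weq rels (ev e w) (ev e' w).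
Proof.
move=> ee'; elim: w => [|[i b] w IH] //.
by rewrite !ev_cons IH; case: b; rewrite /= (ee' i).
Qed.

Definition wcommute (u v : word A) := weq rels (u ++ v) (v ++ u).

(* [comm a b] is convertible to
   [[:: (a, false); (b, false)] ++ inv_word [:: (b, false); (a, false)]]. *)
Lemma wcommute_of_comm a b : rels (comm a b) -> wcommute [:: (a, false)] [:: (b, false)].
Proof. by move=> ab; apply: weq_of_rel. Qed.

Lemma wcommute_sym u v : wcommute u v -> wcommute v u.
Proof. by rewrite /wcommute => uv; symmetry. Qed.

Lemma wcommute_catr u v v' : wcommute u v -> wcommute u v' -> wcommute u (v ++ v').
Proof. by move=> uv uv'; rewrite /wcommute catA uv -catA uv' catA. Qed.

Lemma wcommute_invr u v : wcommute u v -> wcommute u (inv_word v).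
Proof.
move=> uv; rewrite /wcommute -[u ++ _]cat0s -(weq_linv v) -catA (catA v u) -uv.
by rewrite -(catA u v) weq_rinv cats0.
Qed.

Lemma wcommute_evr I u (e : I -> word A) w :
  (forall i, wcommute u (e i)) -> wcommute u (ev e w).
Proof.
move=> ue; elim: w => [|[i b] w IH]; first by rewrite /wcommute cats0.
rewrite ev_cons; apply: wcommute_catr => //.
by case: b; [apply: wcommute_invr|]; apply: ue.
Qed.

Lemma wcommute_ev I J (e1 : I -> word A) (e2 : J -> word A) u v :
  (forall i j, wcommute (e1 i) (e2 j)) -> wcommute (ev e1 u) (ev e2 v).
Proof.
move=> e12; apply: wcommute_evr => j; apply: wcommute_sym.
by apply: wcommute_evr => i; apply: wcommute_sym.
Qed.

Lemma ev_cat_gens I (e1 e2 : I -> word A) w :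
  (forall i j, wcommute (e1 i) (e2 j)) ->
  weq rels (ev (fun i => e1 i ++ e2 i) w) (ev e1 w ++ ev e2 w).
Proof.
move=> e12; elim: w => [|[i b] w IH] //.
rewrite !ev_cons IH; set E1 := ev e1 w; set E2 := ev e2 w.
have swap a c : wcommute c E1 -> weq rels (a ++ c ++ E1 ++ E2) ((a ++ E1) ++ c ++ E2).
  by move=> cE1; rewrite (catA c) cE1 -!catA.
have e2E1 j : wcommute (e2 j) E1.
  by apply: wcommute_evr => k; apply/wcommute_sym/e12.
case: b => /=; last by rewrite -catA; apply: swap.
have /wcommute_invr/wcommute_sym/wcommute_invr e21 := e12 i i.
rewrite inv_word_cat e21 -catA; apply: swap.
by apply: wcommute_sym; apply: wcommute_invr; apply: wcommute_sym.
Qed.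

Definition conj_word (s u : word A) := inv_word s ++ u ++ s.

Lemma conj_word_cat s u v :
  weq rels (conj_word s (u ++ v)) (conj_word s u ++ conj_word s v).
Proof. by rewrite /conj_word -!catA (catA s) weq_rinv. Qed.

Lemma conj_word_inv s u : conj_word s (inv_word u) = inv_word (conj_word s u).
Proof. by rewrite /conj_word !inv_word_cat inv_wordK catA. Qed.

Lemma conj_word_ev I (s : word A) (e e' : I -> word A) w :
  (forall i, weq rels (conj_word s (e i)) (e' i)) ->
  weq rels (conj_word s (ev e w)) (ev e' w).
Proof.
move=> se; elim: w => [|[i b] w IH]; first exact: weq_linv.
by rewrite !ev_cons conj_word_cat IH; case: b; rewrite /= ?conj_word_inv se.
Qed.

End WordGroup.

Lemma weq_ev_hom A B (rA : word A -> Prop) (rB : word B -> Prop) (phi : A -> word B) :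
  (forall r, rA r -> weq rB (ev phi r) [::]) ->
  forall u v, weq rA u v -> weq rB (ev phi u) (ev phi v).
Proof.
move=> phi_rels u v.
elim=> {u v} [w|u v _ IH|u v w _ IH1 _ IH2|u v a b|u v r Hr].
- by [].
- by symmetry.
- by rewrite IH1.
- rewrite !ev_cat !ev_cons; case: b => /=.
  + by rewrite (catA (inv_word _)) weq_linv.
  + by rewrite (catA (phi a)) weq_rinv.
- by rewrite !ev_cat (phi_rels r Hr).
Qed.

Lemma is_wlen_transfer I A B (rA : word A -> Prop) (rB : word B -> Prop)
    (e : I -> word A) (e' : I -> word B) (phi : B -> word A) w n :
  (forall r, rB r -> weq rA (ev phi r) [::]) ->
  (forall i, ev phi (e' i) = e i) ->
  (forall u, weq rA (ev e u) (ev e w) -> weq rB (ev e' u) (ev e' w)) ->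
  is_wlen rA e (ev e w) n -> is_wlen rB e' (ev e' w) n.
Proof.
move=> phi_rels phi_e' e_inj [[u [size_u uw]] n_min]; split.
  by exists u; split; last exact: e_inj.
by move=> v /(weq_ev_hom phi_rels); rewrite !ev_comp !(eq_ev phi_e'); apply: n_min.
Qed.

Section GroupsG1G2.
Variables (T : finType) (relH : seq (word T)) (p : nat) (d : 'I_p -> T).

Local Notation relsH := (relsH relH).
Local Notation rels1 := (rels1 relH d).

Definition xgen (i : 'I_p) : word (gen1 T p) := [:: (gx T i, false)].
Definition ygen (i : 'I_p) : word (gen1 T p) := [:: (gy T i, false)].
Definition zgen (i : 'I_p) : word (gen1 T p) := [:: (gz T i, false)].

Lemma xgen_ygen_commute i j : wcommute rels1 (xgen i) (ygen j).
Proof. by apply: wcommute_of_comm; right; left; exists i, j. Qed.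

Lemma xgen_zgen_commute i j : wcommute rels1 (xgen i) (zgen j).
Proof. by apply: wcommute_of_comm; right; right; left; exists i, j. Qed.

Lemma ygen_zgen_commute i j : wcommute rels1 (ygen i) (zgen j).
Proof. by apply: wcommute_of_comm; do 3 right; left; exists i, j. Qed.

Lemma d_eq_xgen_ygenV i : weq rels1 [:: (gT p (d i), false)] (xgen i ++ inv_word (ygen i)).
Proof. by apply: weq_of_rel; do 4 right; left; exists i. Qed.

Lemma eA_split w : weq rels1 (ev (@eA T p) w) (ev xgen w ++ ev zgen w).
Proof. exact: (ev_cat_gens w xgen_zgen_commute). Qed.

Lemma eB_split w : weq rels1 (ev (@eB T p) w) (ev ygen w ++ ev zgen w).
Proof. exact: (ev_cat_gens w ygen_zgen_commute). Qed.

Lemma liftHE (h : word T) : liftH p h = ev (fun t => [:: (gT p t, false)]) h.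
Proof. by rewrite ev_letters. Qed.

Lemma liftH_inv (h : word T) : liftH p (inv_word h) = inv_word (liftH p h).
Proof. by rewrite !liftHE ev_inv_word. Qed.

Lemma liftH_hom u v : weq relsH u v -> weq rels1 (liftH p u) (liftH p v).
Proof.
rewrite !liftHE; apply: weq_ev_hom => r Hr.
by rewrite -liftHE; apply: weq_rel_nil; left; exists r.
Qed.

(* Read in order, the letters y_i^-1 of d(w) spell y(rev w)^-1. *)
Lemma liftH_palindrome w : rev w = w ->
  weq rels1 (liftH p (ev (eR d) w)) (ev xgen w ++ inv_word (ev ygen w)).
Proof.
move=> w_pal; rewrite liftHE ev_comp.
transitivity (ev (fun i => xgen i ++ inv_word (ygen i)) w).
  by apply: ev_weq => i; apply: d_eq_xgen_ygenV.
rewrite ev_cat_gens; last by move=> i j; apply/wcommute_invr/xgen_ygen_commute.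
by rewrite ev_inv_gens w_pal ev_inv_word.
Qed.

Lemma eA_liftH_eB w h : rev w = w -> weq relsH h (ev (eR d) w) ->
  weq rels1 (ev (@eA T p) w ++ liftH p (inv_word h)) (ev (@eB T p) w).
Proof.
move=> w_pal hw.
rewrite liftH_inv (liftH_hom hw) liftH_palindrome // eA_split eB_split.
rewrite inv_word_cat inv_wordK.
set X := ev xgen w; set Y := ev ygen w; set Z := ev zgen w.
have XZY : wcommute rels1 X (Z ++ Y).
  apply: wcommute_catr; apply: wcommute_ev.
  - exact: xgen_zgen_commute.
  - exact: xgen_ygen_commute.
have YZ : wcommute rels1 Y Z by apply: wcommute_ev; exact: ygen_zgen_commute.
by rewrite -catA (catA Z) (catA X) XZY -catA weq_rinv cats0 -YZ.
Qed.

Definition to_F (g : gen1 T p) : word T := if g is gz i then [:: (d i, false)] else [::].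

Lemma to_F_liftH (h : word T) : ev to_F (liftH p h) = [::].
Proof. by rewrite liftHE ev_comp (eq_ev (e' := fun _ => [::])) ?ev_nil_gens. Qed.

Lemma to_F_rels r : rels1 r -> weq relsH (ev to_F r) [::].
Proof.
case=> [[h _ ->]|[[i [j ->]]|[[i [j ->]]|[[i [j ->]]|[[i ->]|[c ->]]]]]].
- by rewrite to_F_liftH.
- by [].
- exact: (weq_rinv _ [:: (d j, false)]).
- exact: (weq_rinv _ [:: (d j, false)]).
- by [].
- by rewrite /comm /ev /= cats0; apply: weq_rinv.
Qed.

Lemma is_wlen_F_lift (e : 'I_p -> word (gen1 T p)) w n :
  (forall i, ev to_F (e i) = eR d i) ->
  (forall u v : word 'I_p, weq relsH (ev (eR d) u) (ev (eR d) v) -> weq (@no_rels 'I_p) u v) ->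
  is_wlen relsH (eR d) (ev (eR d) w) n -> is_wlen rels1 e (ev e w) n.
Proof.
move=> to_F_e F_free; apply: is_wlen_transfer to_F_rels to_F_e _ => u /F_free.
by apply: weq_ev_hom => r [].
Qed.

Definition zcoord (s : S1gen T p) : word 'I_p :=
  match s with sZ i | sA i | sB i => [:: (i, false)] | _ => [::] end.

Lemma to_F_eS1 v : ev to_F (ev (@eS1 T p) v) = ev (eR d) (ev zcoord v).
Proof. by rewrite !ev_comp; apply: eq_ev => -[]. Qed.

Lemma eS1_sT (h : word T) : ev (@eS1 T p) (map (fun x => (sT p x.1, x.2)) h) = liftH p h.
Proof. by rewrite liftHE ev_map_letters. Qed.

Lemma wlen_F_le_vertex w n h v :
  is_wlen relsH (eR d) (ev (eR d) w) n ->
  weq rels1 (ev (@eS1 T p) v) (ev (@eA T p) w ++ liftH p h) -> n <= size v.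
Proof.
have to_F_eA : ev to_F (ev (@eA T p) w) = ev (eR d) w.
  by rewrite ev_comp; apply: eq_ev.
move=> [_ n_min] /(weq_ev_hom to_F_rels).
rewrite to_F_eS1 ev_cat to_F_eA to_F_liftH cats0 => /n_min /leq_trans; apply.
by apply: size_ev_le => -[].
Qed.

Lemma lift1E (u : word (gen1 T p)) : lift1 u = ev (fun g => [:: (g2 g, false)]) u.
Proof. by rewrite ev_letters. Qed.

Lemma conj_s2_eA w :
  weq (rels2 relH d) (conj_word [:: (gs2, false)] (lift1 (ev (@eA T p) w)))
                     (lift1 (ev (@eB T p) w)).
Proof.
rewrite !lift1E !ev_comp; apply: conj_word_ev => i.
by apply: weq_of_rel; right; exists i; rewrite /conj_word -!catA.
Qed.

End GroupsG1G2.

Unset Implicit Arguments.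

Open Scope R_scope.

Theorem lemma3p8
  (T : finType) (relH : seq (word T)) (p : nat) (d : 'I_p -> T)
  (* R = {d_1,...,d_p} is a subset of T *)
  (Hd_inj : injective d)
  (* F = <R> is free with free basis R in H *)
  (Hfree : forall u v : word 'I_p,
      weq (relsH relH) (ev (eR d) u) (ev (eR d) v) -> weq (@no_rels 'I_p) u v)
  (Delta f : R -> R) (D r0 : R)
  (* Delta is a non-decreasing bijection of [0, oo) *)
  (HDmono : forall x y, 0 <= x -> x <= y -> Delta x <= Delta y)
  (HDpos : forall x, 0 <= x -> 0 <= Delta x)
  (HDinj : forall x y, 0 <= x -> 0 <= y -> Delta x = Delta y -> x = y)
  (HDsurj : forall y, 0 <= y -> exists x, 0 <= x /\ Delta x = y)
  (* Delta is Lipschitz equivalent to Dist_F^H *)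
  (HDequiv : exists C : nat, (1 <= C)%N /\
      (forall n m : nat, dist_is relH d (C * n) m -> Delta (INR n) <= INR C * INR m) /\
      (forall n m : nat, dist_is relH d n m -> INR m <= INR C * Delta (INR (C * n))))
  (* Delta(r) >= r for r >= 1 *)
  (HDge : forall x, 1 <= x -> x <= Delta x)
  (* f = Delta^{-1} *)
  (Hfinv : forall x, 0 <= x -> 0 <= f x /\ Delta (f x) = x)
  (* f(|g|_R) <= |g|_T for g in F *)
  (Hflen : forall (w : word 'I_p) (n m : nat),
      is_wlen (relsH relH) (eR d) (ev (eR d) w) n ->
      is_wlen (relsH relH) (@eT T) (ev (eR d) w) m -> f (INR n) <= INR m)
  (HD : 1 < D) (Hr0 : 1 <= r0)
  (* palindromic certificates *)
  (Hpal : forall r : R, r0 <= r ->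
      exists w : word 'I_p, reduced w /\ rev w = w /\
        (exists n : nat, is_wlen (relsH relH) (eR d) (ev (eR d) w) n /\
                         r / D <= INR n <= r) /\
        (exists m : nat, is_wlen (relsH relH) (@eT T) (ev (eR d) w) m /\
                         INR m <= D * f r))
  (r : nat) (Hr : r0 <= INR r) :
  exists g0 g1 : word (gen1 T p),
    (* (1) s_2^{-1} g_0 s_2 = g_1 in G_2 *)
    weq (rels2 relH d) ((gs2, true) :: lift1 g0 ++ [:: (gs2, false)]) (lift1 g1) /\
    (* (2) g_0 in F_xz, g_1 in F_yz, with length bounds *)
    (exists n : nat, is_wlen (rels1 relH d) (@eA T p) g0 n /\ INR r / D <= INR n <= INR r) /\
    (exists n : nat, is_wlen (rels1 relH d) (@eB T p) g1 n /\ INR r / D <= INR n <= INR r) /\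
    (* (3) a path in Cayley(G_1, S_1) from g_0 to g_1 *)
    (exists w : word (S1gen T p),
       INR (size w) <= D * f (INR r) /\
       weq (rels1 relH d) (g0 ++ ev (@eS1 T p) w) g1 /\
       forall k : nat, (k <= size w)%N ->
         (* k-th vertex is g_0 h with h in H *)
         (exists h : word T,
            weq (rels1 relH d) (g0 ++ ev (@eS1 T p) (take k w)) (g0 ++ liftH p h)) /\
         (* k-th vertex lies outside the open ball of radius r/D about e *)
         (forall v : word (S1gen T p),
            weq (rels1 relH d) (ev (@eS1 T p) v) (g0 ++ ev (@eS1 T p) (take k w)) ->
            INR r / D <= INR (size v))).
Proof.
have [w [_ [w_pal [[n [Hn n_bounds]] [m [[[wT [size_wT wT_w]] _] m_bound]]]]]] :=
  Hpal (INR r) Hr.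
rewrite ev_letter_id in wT_w.
exists (ev (@eA T p) w), (ev (@eB T p) w).
split; first exact: conj_s2_eA.
split; first by exists n; split=> //; apply: is_wlen_F_lift Hfree Hn.
split; first by exists n; split=> //; apply: is_wlen_F_lift Hfree Hn.
exists (map (fun x => (sT p x.1, x.2)) (inv_word wT)); split.
  by rewrite size_map size_inv_word size_wT.
split; first by rewrite eS1_sT; apply: eA_liftH_eB.
move=> k _; rewrite -map_take eS1_sT; split; first by exists (take k (inv_word wT)).
move=> v /(wlen_F_le_vertex Hn) n_le_v.
by apply: Rle_trans (proj1 n_bounds) _; apply/le_INR/leP.
Qed.
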